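(* Let $K\ge 1$ and $N$ be integers with $N-K\ge K$, and let $\mu>0$. Consider $K$ files stored on $N$ nodes using a systematic $(N,K)$ MDS code, each node having service rate $\mu$. Then the water-filling algorithm is optimal: the set of arrival-rate vectors $(\lambda_1,\dots,\lambda_K)\in\mathbb{R}_{\ge 0}^K$ that it can serve is the whole region $$\Big\{(\lambda_1,\dots,\lambda_K)\in\mathbb{R}_{\ge0}^K:\ \sum_{i=1}^{K}\Big(\min(\lambda_i,\mu)+K(\lambda_i-\mu)^{+}\Big)\le N\mu\Big\},$$ where $(x)^+=\max(0,x)$; in particular this region is the service capacity region of the system.
   Context: Storage model: there are $K$ files $f_1,\dots,f_K$ of equal size stored on $N$ nodes labeled $1,\dots,N$, each node having service rate $\mu$. In the systematic $(N,K)$ MDS code, node $i$ stores $f_i$ for $1\le i\le K$, and nodes $K+1,\dots,N$ store parity symbols, such that $f_i$ can be recovered either from node $i$ alone or from any $K$ of the other $N-1$ nodes; the recovering sets of $f_i$ are $\{i\}$ and every $K$-element subset of $\{1,\dots,N\}\setminus\{i\}$, denoted $R^{(i)}_1,\dots,R^{(i)}_{t_i}$. Requests for $f_i$ arrive at rate $\lambda_i\ge0$. The service capacity region is the set of vectors $(\lambda_1,\dots,\lambda_K)$ for which there exist $\lambda^{(i)}_j\ge 0$ (rate of requests for $f_i$ sent to $R^{(i)}_j$) with $\sum_j\lambda^{(i)}_j=\lambda_i$ for all $i$ and $\sum_{i}\sum_{j:\,\ell\in R^{(i)}_j}\lambda^{(i)}_j\le\mu$ for every node $\ell$. Water-filling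 algorithm: given $\lambda_1,\dots,\lambda_K$, let $\gamma_\ell$ denote the load on node $\ell$. First set $\gamma_i=\min(\lambda_i,\mu)$ for $i=1,\dots,K$ (requests are sent to their systematic node until it is saturated) and $\gamma_\ell=0$ for $\ell>K$. The remaining rate $\lambda_{\mathrm{coded}}=\sum_{i=1}^K(\lambda_i-\mu)^+$ is served through coded recovery, each unit of it occupying $K$ unsaturated nodes (a request for $f_i$ with $\lambda_i>\mu$ never uses node $i$, which is saturated). While $\lambda_{\mathrm{coded}}>0$ and $\min_\ell\gamma_\ell<\mu$: choose the $K$ least-loaded nodes, send an infinitesimal rate $\epsilon>0$ to each of them, decrease $\lambda_{\mathrm{coded}}$ by $\epsilon$ and increase these $K$ loads by $\epsilon$. The algorithm serves $(\lambda_1,\dots,\lambda_K)$ if it ends with $\lambda_{\mathrm{coded}}=0$ and all loads at most $\mu$. *)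

From HB Require Import structures.
From mathcomp Require Import all_boot all_order all_algebra.
From mathcomp Require Import reals.
Import Order.TTheory GRing.Theory Num.Theory.
Local Open Scope ring_scope.

(* Nodes are 'I_N, files are 'I_K; file i is stored systematically on the node
   whose index equals i (nodes 0..K-1 in 0-based indexing). *)

Definition posp {R : realType} (x : R) : R := Num.max 0 x.

Definition recovering (K N : nat) (i : 'I_K) (S : {set 'I_N}) : bool :=
  (S == [set j : 'I_N | val j == val i])
  || ((#|S| == K) && [forall j in S, val j != val i]).

Definition in_capacity_region {R : realType} (K N : nat) (mu : R)
    (lam : 'I_K -> R) : Prop :=
  exists x : 'I_K -> {set 'I_N} -> R,
    (forall i S, 0 <= x i S) /\
    (forall i, \sum_(S : {set 'I_N} | recovering K N i S) x i S = lam i) /\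
    (forall l : 'I_N,
       \sum_(i < K) \sum_(S : {set 'I_N} | recovering K N i S && (l \in S)) x i S
         <= mu).

Definition in_region {R : realType} (K N : nat) (mu : R) (lam : 'I_K -> R) : Prop :=
  \sum_(i < K) (Num.min (lam i) mu + K%:R * posp (lam i - mu)) <= N%:R * mu.

Definition wf_init {R : realType} (K N : nat) (mu : R) (lam : 'I_K -> R)
    (l : 'I_N) : R :=
  \sum_(i < K | val i == val l) Num.min (lam i) mu.

Definition wf_coded {R : realType} (K : nat) (mu : R) (lam : 'I_K -> R) : R :=
  \sum_(i < K) posp (lam i - mu).

(* Fluid (epsilon -> 0) model of the water-filling loop: g t l is the load of
   node l after coded rate t has been allocated, 0 <= t <= T.  Each unit of
   coded rate occupies K distinct nodes (so each node's load grows at rate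
   between 0 and 1, and total load at rate K), and it is always sent to the
   K least-loaded nodes: if on a time interval node l stays strictly less
   loaded than node m and m receives some rate, then l receives full rate. *)
Definition wf_trajectory {R : realType} (K N : nat) (init : 'I_N -> R) (T : R)
    (g : R -> 'I_N -> R) : Prop :=
  (forall l, g 0 l = init l) /\
  (forall s t l, 0 <= s -> s <= t -> t <= T ->
     0 <= g t l - g s l <= t - s) /\
  (forall s t, 0 <= s -> s <= t -> t <= T ->
     \sum_(l : 'I_N) (g t l - g s l) = K%:R * (t - s)) /\
  (forall s t (l m : 'I_N), 0 <= s -> s <= t -> t <= T ->
     (forall u, s <= u -> u <= t -> g u l < g u m) ->
     g s m < g t m -> g t l - g s l = t - s).

(* The water-filling algorithm serves lam: it runs (a fluid run exists), and
   every run ends with all loads at most mu (all the coded rate is served,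
   since a run allocates the whole coded rate T). *)
Definition wf_serves {R : realType} (K N : nat) (mu : R) (lam : 'I_K -> R) : Prop :=
  (exists g, wf_trajectory K N (wf_init K N mu lam) (wf_coded K mu lam) g) /\
  (forall g, wf_trajectory K N (wf_init K N mu lam) (wf_coded K mu lam) g ->
     forall l : 'I_N, g (wf_coded K mu lam) l <= mu).

(* In its fluid form, water-filling keeps a water level h(t) once coded rate t
   has been allocated: the least level such that raising every node at unit
   speed from its initial load, up to that level, absorbs the rate K t.  As the
   K <= N - K parity nodes start empty, h is nondecreasing and 1-Lipschitz,
   which yields a run.  In any run, a node can rise above a level v only while
   fewer than K nodes lie below v, and a node not served at full rate has more
   than K nodes at most as loaded as itself; so if a node ended above mu,
   either every node would end above mu, against the total load
   sum a + K T <= N mu, or these two counts would collide.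

   For the capacity region, a request for f_i costs one node-unit on its
   systematic node, which serves at most mu, and K node-units otherwise; this
   gives necessity.  Conversely, the coded rate C is spread over the nodes in
   proportion to their spare capacity, capped at C.  A load vector with
   entries in [0, C] summing to K C is a nonnegative combination of K-subsets
   (a point of the scaled hypersimplex), found greedily by induction on its
   support, and these K-subsets avoid the saturated systematic nodes. *)

From mathcomp Require Import classical_sets.
From mathcomp Require Import all_boot all_order all_algebra.
From mathcomp Require Import reals.
From mathcomp Require Import ring lra.
Import Order.TTheory GRing.Theory Num.Theory.
Local Open Scope ring_scope.

Section NonnegInf.
Context {R : realType} {E : set R}.
Hypotheses (E_neq0 : exists u, E u) (E_ge0 : forall u, E u -> 0 <= u).

Lemma nonneg_has_inf : has_inf E.
Proof. by split; [case: E_neq0 => u Eu; exists u | exists 0 => u /E_ge0]. Qed.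

Lemma nonneg_inf_le u : E u -> inf E <= u.
Proof. by move=> Eu; apply: (ge_inf (proj2 nonneg_has_inf)). Qed.

Lemma nonneg_inf_ge0 : 0 <= inf E.
Proof. by apply: lb_le_inf => [|u /E_ge0]; [case: E_neq0 => u Eu; exists u|]. Qed.

Lemma nonneg_inf_adherent [e : R] : 0 < e -> exists2 u, E u & u < inf E + e.
Proof. by move=> e0; apply: inf_adherent => //; exact: nonneg_has_inf. Qed.
End NonnegInf.

Lemma ler_add_scaled_gt0 {R : realType} [x y c : R] : 0 < c ->
  (forall e, 0 < e -> y <= x + c * e) -> y <= x.
Proof.
move=> c0 H; apply/ler_addgt0Pr => e e0.
by have := H (e / c) (divr_gt0 e0 c0); rewrite mulrC divfK // gt_eqF.
Qed.

Ltac case_min_max := repeat match goal with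
 | |- context[Num.min ?x ?y] => case: (leP x y) => ?
 | |- context[Num.max ?x ?y] => case: (leP x y) => ? end.

Section WaterLevel.
Context {R : realType}.

(* Load at time [t] of a node that starts at [a] and receives unit rate
   while it is below the water level [h]. *)
Definition fill (h a t : R) := Num.max a (Num.min (a + t) h).

Lemma fill_time0 (h a : R) : fill h a 0 = a.
Proof. rewrite /fill; case_min_max; lra. Qed.

Lemma fill_level0 (a t : R) : 0 <= a -> 0 <= t -> fill 0 a t = a.
Proof. move=> *; rewrite /fill; case_min_max; lra. Qed.

Lemma fill_below_level (h a t : R) : 0 <= t -> a + t <= h -> fill h a t = a + t.
Proof. move=> *; rewrite /fill; case_min_max; lra. Qed.

Lemma le_fill {h h' : R} (a : R) {s t : R} : h <= h' -> s <= t ->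
  fill h a s <= fill h' a t.
Proof. move=> *; rewrite /fill; case_min_max; lra. Qed.

Lemma fill_level_lipschitz (h h' a s : R) : h <= h' ->
  fill h' a s <= fill h a s + (h' - h).
Proof. move=> *; rewrite /fill; case_min_max; lra. Qed.

Lemma fill_addD (h a s d : R) : 0 <= d -> fill (h + d) a (s + d) <= fill h a s + d.
Proof. move=> *; rewrite /fill; case_min_max; lra. Qed.

Lemma fill0_addD (h s d : R) : 0 <= h -> 0 <= s -> 0 <= d ->
  fill h 0 s + d <= fill (h + d) 0 (s + d).
Proof. move=> *; rewrite /fill; case_min_max; lra. Qed.

Lemma fill_concave (h a s t : R) : 0 <= s -> s <= t -> 0 <= a -> 0 <= h ->
  (t - s) * a + s * fill h a t <= t * fill h a s.
Proof. move=> *; rewrite /fill; case_min_max; nra. Qed.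

Context {N : nat} (K : nat) (a : 'I_N -> R).
Hypothesis a_ge0 : forall l, 0 <= a l.
Hypothesis K_le_empty : (K <= #|[set l | a l == 0%R]|)%N.

Definition total_fill h t := \sum_l fill h (a l) t.

(* The water level at time [t] is the least [h] at which the loads [fill h]
   account for the coded rate [K * t] allocated so far. *)
Definition level_set t : set R :=
  [set h | 0 <= h /\ \sum_l a l + K%:R * t <= total_fill h t].
Definition level t := inf (level_set t).

Lemma total_fill_level_lipschitz (h h' t : R) : h <= h' ->
  total_fill h' t <= total_fill h t + N%:R * (h' - h).
Proof.
move=> hh'; rewrite -[N in N%:R]card_ord mulr_natl -sumr_const -big_split /=.
by apply: ler_sum => l _; exact: fill_level_lipschitz.
Qed.

Lemma total_fill_level0 (t : R) : 0 <= t -> total_fill 0 t = \sum_l a l.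
Proof. by move=> t0; apply: eq_bigr => l _; rewrite fill_level0. Qed.

Lemma level_set_witness (t : R) : 0 <= t -> level_set t (\sum_l a l + t).
Proof.
move=> t0; have a_le_sum l : a l <= \sum_l a l.
  by rewrite (bigD1 l) //= lerDl sumr_ge0.
split; first by rewrite addr_ge0 ?sumr_ge0.
have -> : total_fill (\sum_l a l + t) t = \sum_l (a l + t).
  by apply: eq_bigr => l _; rewrite fill_below_level // lerD2r.
rewrite big_split /= sumr_const card_ord lerD2l -[t *+ N]mulr_natl.
apply: ler_wpM2r => //; rewrite ler_nat.
by rewrite -[N]card_ord; apply: leq_trans K_le_empty (max_card _).
Qed.

Lemma level_ge0 {t : R} : 0 <= t -> 0 <= level t.
Proof.
move=> t0; apply: nonneg_inf_ge0 => [|u []//].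
by exists (\sum_l a l + t); apply: level_set_witness.
Qed.

Lemma level_le (t h : R) : 0 <= t -> level_set t h -> level t <= h.
Proof. by move=> t0 Sh; apply: nonneg_inf_le => // [|u []]; first by exists h. Qed.

Lemma total_fill_level (t : R) : 0 <= t ->
  total_fill (level t) t = \sum_l a l + K%:R * t.
Proof.
move=> t0; have S_neq0 : exists u, level_set t u.
  by exists (\sum_l a l + t); exact: level_set_witness.
have S_ge0 u : level_set t u -> 0 <= u by case.
have N1_gt0 : 0 < N%:R + 1 :> R by rewrite ltr_wpDl.
apply/eqP; rewrite eq_le; apply/andP; split.
  have [->|level_neq0] := eqVneq (level t) 0.
    by rewrite total_fill_level0 // lerDl mulr_ge0.
  have level_gt0 : 0 < level t by rewrite lt_def level_neq0 level_ge0.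
  apply: (ler_add_scaled_gt0 N1_gt0) => e e0.
  pose e' := Num.min e (level t / 2).
  have e'0 : 0 < e' by rewrite lt_min e0 divr_gt0.
  have e'_lt : e' < level t by rewrite gt_min; apply/orP; right; lra.
  have e'_le : e' <= e by rewrite ge_min lexx.
  have below : total_fill (level t - e') t < \sum_l a l + K%:R * t.
    rewrite ltNge; apply/negP => le_sum.
    have ge0 : 0 <= level t - e' by lra.
    have := @level_le t (level t - e') t0 (conj ge0 le_sum); lra.
  have le_level : level t - e' <= level t by lra.
  have := total_fill_level_lipschitz _ _ t le_level.
  have : N%:R * (level t - (level t - e')) <= (N%:R + 1) * e.
    by rewrite opprB addrC subrK; apply: ler_pM => //; lra.
  lra.
apply: (ler_add_scaled_gt0 N1_gt0) => e e0.
have [u [u0 Su] u_lt] := nonneg_inf_adherent S_neq0 S_ge0 e0.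
have level_le_u : level t <= u by apply: level_le.
have := total_fill_level_lipschitz _ _ t level_le_u.
have : N%:R * (u - level t) <= (N%:R + 1) * e by apply: ler_pM => //; lra.
lra.
Qed.

Lemma level_mono {s t : R} : 0 <= s -> s <= t -> level s <= level t.
Proof.
move=> s0 st; have t0 : 0 <= t by lra.
apply: level_le => //; split; first exact: level_ge0.
have [t_eq0|t_neq0] := eqVneq t 0.
  have -> : s = t by lra.
  by rewrite total_fill_level.
have t_gt0 : 0 < t by rewrite lt_def t_neq0.
have concave : (t - s) * \sum_l a l + s * total_fill (level t) t
               <= t * total_fill (level t) s.
  rewrite /total_fill !mulr_sumr -big_split /=.
  by apply: ler_sum => l _; apply: fill_concave => //; exact: level_ge0.
rewrite total_fill_level // in concave.
by rewrite -(ler_pM2l t_gt0); nra.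
Qed.

Lemma level_lipschitz {s t : R} : 0 <= s -> s <= t -> level t <= level s + (t - s).
Proof.
move=> s0 st; set d := t - s; have d0 : 0 <= d by rewrite /d; lra.
apply: level_le; first lra.
split; first by have := level_ge0 s0; lra.
have -> : t = s + d by rewrite /d; ring.
have empty_nodes_rise :
    \sum_l (fill (level s) (a l) s + (if a l == 0 then d else 0))
    <= total_fill (level s + d) (s + d).
  apply: ler_sum => l _; case: eqP => [->|_].
    by apply: fill0_addD => //; exact: level_ge0.
  by rewrite addr0; apply: le_fill; lra.
rewrite big_split /= -big_mkcond -/(total_fill _ _) in empty_nodes_rise.
rewrite total_fill_level // in empty_nodes_rise.
have : d * K%:R <= \sum_(l | a l == 0) d.
  rewrite sumr_const -[d *+ _]mulr_natr; apply: ler_wpM2l => //; rewrite ler_nat.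
  by apply: leq_trans K_le_empty _; rewrite cardsE.
lra.
Qed.

Definition waterfill (t : R) (l : 'I_N) := fill (level t) (a l) t.

Lemma waterfill_trajectory (T : R) : 0 <= T -> wf_trajectory K N a T waterfill.
Proof.
move=> T0; split; first by move=> l; rewrite /waterfill fill_time0.
split.
  move=> s t l s0 st tT; apply/andP; split.
    by rewrite subr_ge0; apply: le_fill => //; apply: level_mono.
  have d0 : 0 <= t - s by lra.
  rewrite lerBlDr addrC /waterfill.
  apply: le_trans (le_fill (a l) (level_lipschitz s0 st) (lexx t)) _.
  by have := fill_addD (level s) (a l) s (t - s) d0; rewrite [s + _]addrC subrK.
split.
  move=> s t s0 st tT; rewrite sumrB -!/(total_fill _ _) !total_fill_level //; [ring|lra].
move=> s t l m s0 st tT l_below_m m_rises.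
have t0 : 0 <= t by lra.
have := l_below_m t st (lexx t); move: m_rises; rewrite /waterfill => m_rises l_lt_m.
have l_below_level : a l + t <= level t.
  rewrite leNgt; apply/negP => level_lt.
  move: l_lt_m m_rises; rewrite /fill; move: (level_mono s0 st).
  case_min_max; lra.
rewrite !fill_below_level //; first ring.
have := level_lipschitz s0 st; lra.
Qed.
End WaterLevel.

Section UpperLipschitzIVT.
Context {R : realType} {T : R} (f : R -> R).
Hypothesis T0 : 0 <= T.
Hypothesis f_lipschitz : forall s t, 0 <= s -> s <= t -> t <= T -> f t - f s <= t - s.

Lemma upper_lipschitz_ivt v : f 0 <= v -> v <= f T ->
  exists s, [/\ 0 <= s, s <= T & f s = v].
Proof.
move=> f0v vfT.
pose E : set R := [set u | 0 <= u /\ u <= T /\ v <= f u]%classic.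
have E_neq0 : exists u, E u by exists T.
have E_ge0 u : E u -> 0 <= u by case.
set s := inf E.
have s0 : 0 <= s by apply: nonneg_inf_ge0.
have sT : s <= T by apply: nonneg_inf_le => //; exists T.
exists s; split => //; apply/eqP; rewrite eq_le; apply/andP; split.
  have [->|s_neq0] := eqVneq s 0; first by [].
  have s_gt0 : 0 < s by rewrite lt_def s_neq0 s0.
  apply/ler_addgt0Pr => e e0.
  pose e' := Num.min e s.
  have e'0 : 0 < e' by rewrite lt_min e0 s_gt0.
  have e'e : e' <= e by rewrite ge_min lexx.
  have e's : e' <= s by rewrite ge_min lexx orbT.
  have f_lt : f (s - e') < v.
    rewrite ltNge; apply/negP => vf.
    have : E (s - e') by split; [lra | split; [lra | by []]].
    by move/(nonneg_inf_le E_neq0 E_ge0); rewrite -/s; lra.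
  have s_e'0 : 0 <= s - e' by lra.
  have s_e'_le : s - e' <= s by lra.
  have := f_lipschitz _ _ s_e'0 s_e'_le sT; lra.
apply/ler_addgt0Pr => e e0.
have [u [u0 [uT vu]] u_lt] := nonneg_inf_adherent E_neq0 E_ge0 e0.
have su : s <= u by apply: nonneg_inf_le.
have := f_lipschitz _ _ s0 su uT; lra.
Qed.
End UpperLipschitzIVT.

Lemma finite_pos_lower_bound {R : realType} {n : nat} (P : pred 'I_n)
  (f : 'I_n -> R) (r : R) : 0 < r -> (forall q, P q -> 0 < f q) ->
  exists d, [/\ 0 < d, d <= r & forall q, P q -> d < f q].
Proof.
move=> r0 f_gt0.
suff [d [d0 dr d_lt]] : exists d,
    [/\ 0 < d, d <= r & forall q, q \in enum 'I_n -> P q -> d < f q].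
  by exists d; split => // q Pq; apply: d_lt; rewrite ?mem_enum.
elim: (enum 'I_n) => [|q s [d [d0 dr d_lt]]]; first by exists r; split.
have [Pq|nPq] := boolP (P q); last first.
  exists d; split => // q'; rewrite in_cons => /orP[/eqP ->|]; last exact: d_lt.
  by rewrite (negbTE nPq).
have fq := f_gt0 q Pq.
exists (Num.min d (f q / 2)); split; first by rewrite lt_min d0 divr_gt0.
  by rewrite ge_min dr.
move=> q'; rewrite in_cons gt_min => /orP[/eqP -> _|q's Pq'].
  by apply/orP; right; lra.
by rewrite d_lt.
Qed.

Lemma card_ord_geq (N K : nat) : #|[set q : 'I_N | (K <= q)%N]| = (N - K)%N.
Proof.
rewrite -sum1_card (eq_bigl (fun q : 'I_N => predT q && (K <= q)%N)).
  by rewrite -(big_geq_mkord K N predT (fun _ => 1%N)) sum_nat_const_nat muln1.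
by move=> q; rewrite inE.
Qed.

Section Trajectory.
Context {R : realType} {N K : nat} {a : 'I_N -> R} {T : R} {g : R -> 'I_N -> R}.
Hypotheses (g_traj : wf_trajectory K N a T g) (T0 : 0 <= T).

Lemma traj_init l : g 0 l = a l.
Proof. by case: g_traj => init _; apply: init. Qed.

Lemma traj_mono l {s t} : 0 <= s -> s <= t -> t <= T -> g s l <= g t l.
Proof.
by case: g_traj => _ [rate _] s0 st tT; case/andP: (rate s t l s0 st tT); rewrite subr_ge0.
Qed.

Lemma traj_lipschitz l {s t} : 0 <= s -> s <= t -> t <= T -> g t l - g s l <= t - s.
Proof. by case: g_traj => _ [rate _] s0 st tT; case/andP: (rate s t l s0 st tT). Qed.

Lemma traj_sum {s t} : 0 <= s -> s <= t -> t <= T ->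
  \sum_l (g t l - g s l) = K%:R * (t - s).
Proof. by case: g_traj => _ [_ [sum _]]; apply: sum. Qed.

Lemma traj_full_rate {s t l m} : 0 <= s -> s <= t -> t <= T ->
  (forall u, s <= u -> u <= t -> g u l < g u m) ->
  g s m < g t m -> g t l - g s l = t - s.
Proof. by case: g_traj => _ [_ [_ least_loaded]]; apply: least_loaded. Qed.

(* If node [l] was not served at full rate just before time [r], then during a
   short interval before [r] the nodes above [g r l] were frozen, so the rate
   [K] was carried by the nodes at most [g r l], node [l] itself with rate
   less than one. *)
Lemma card_le_not_full_rate_at {l r} : 0 < r -> r <= T ->
  (forall u, 0 <= u -> u < r -> g r l - g u l < r - u) ->
  (K < #|[set q | (g r q <= g r l)%R]|)%N.
Proof.
move=> r_gt0 rT not_full.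
set c := g r l.
have above_gt0 q : c < g r q -> 0 < g r q - c by rewrite subr_gt0.
have [d [d0 dr d_lt]] :=
  finite_pos_lower_bound [pred q | c < g r q] _ _ r_gt0 above_gt0.
set u0 := r - d.
have u00 : 0 <= u0 by rewrite /u0; lra.
have u0r : u0 < r by rewrite /u0; lra.
have u0T : u0 <= T by lra.
have r_u0 : r - u0 = d by rewrite /u0; ring.
have l_lt : g r l - g u0 l < d by have := not_full u0 u00 u0r; lra.
have frozen q : c < g r q -> g u0 q = g r q.
  move=> cq; apply/eqP; rewrite eq_le traj_mono ?(ltW u0r) //= leNgt.
  apply/negP => rises.
  have dq := d_lt q cq; have lq := traj_lipschitz q u00 (ltW u0r) rT.
  have l_below u : u0 <= u -> u <= r -> g u l < g u q.
    move=> u0u ur; have := traj_mono l (le_trans u00 u0u) ur rT.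
    have := traj_mono q u00 u0u (le_trans ur rT); rewrite /= in dq.
    rewrite -/c in lq *; lra.
  have := traj_full_rate u00 (ltW u0r) rT l_below rises; lra.
have sum := traj_sum u00 (ltW u0r) rT.
rewrite (bigID [pred q | c < g r q]) /= big1 ?add0r in sum; last first.
  by move=> q cq; rewrite frozen // subrr.
have slack : 0 < \sum_(q | ~~ (c < g r q)) (d - (g r q - g u0 q)).
  rewrite (bigD1 l) /=; last by rewrite -/c ltxx.
  apply: ltr_pwDl; first lra.
  by apply: sumr_ge0 => q _; have := traj_lipschitz q u00 (ltW u0r) rT; lra.
rewrite sumrB sum sumr_const r_u0 in slack.
have -> : [set q | g r q <= c] = [set q | ~~ (c < g r q)].
  by apply/setP => q; rewrite !inE leNgt.
rewrite cardsE -(ltr_nat R) -(ltr_pM2r d0) !mulr_natl; lra.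
Qed.

Lemma exists_full_rate_start l : g T l - a l < T ->
  exists r, [/\ 0 < r, r <= T, g T l - g r l = T - r &
                forall u, 0 <= u -> u < r -> g r l - g u l < r - u].
Proof.
move=> not_full.
pose E : set R := [set u | 0 <= u /\ u <= T /\ g T l - g u l = T - u]%classic.
have ET : E T by split; [exact: T0 | split => //; rewrite !subrr].
have E_neq0 : exists u, E u by exists T.
have E_ge0 u : E u -> 0 <= u by case.
set r := inf E.
have r0 : 0 <= r by apply: nonneg_inf_ge0.
have rT : r <= T by apply: nonneg_inf_le.
have Er : g T l - g r l = T - r.
  apply/eqP; rewrite eq_le traj_lipschitz //= lerBrDl; apply/ler_addgt0Pr => e e0.
  have [u [u0 [uT Eu]] u_lt] := nonneg_inf_adherent E_neq0 E_ge0 e0.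
  have ru : r <= u by apply: nonneg_inf_le.
  have := traj_mono l r0 ru uT; rewrite -/r in u_lt; lra.
have r_gt0 : 0 < r.
  rewrite lt_def r0 andbT; apply/eqP => r_eq0.
  by move: Er not_full; rewrite r_eq0 traj_init subr0 => ->; rewrite ltxx.
exists r; split => // u u0 ur; rewrite lt_neqAle traj_lipschitz ?(ltW ur) // andbT.
apply/eqP => full; have : E u by split => //; split; lra.
by move/(nonneg_inf_le E_neq0 E_ge0); rewrite -/r; lra.
Qed.

Lemma card_le_not_full_rate {l} : g T l - a l < T ->
  (K < #|[set q | (g T q <= g T l)%R]|)%N.
Proof.
move=> /exists_full_rate_start[r [r_gt0 rT Er not_full]].
apply: leq_trans (card_le_not_full_rate_at r_gt0 rT not_full) _.
apply: subset_leq_card; apply/subsetP => q; rewrite !inE => below.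
have := traj_lipschitz q (ltW r_gt0) rT (lexx T); lra.
Qed.

(* A node that rises above [v] after time [s] is always more loaded than the
   nodes ending below [v], which therefore get full rate: they can only be
   fewer than [K]. *)
Lemma card_lt_rising {m v s} : 0 <= s -> s <= T -> g s m = v -> v < g T m ->
  (#|[set q | (g T q < v)%R]| < K)%N.
Proof.
move=> s0 sT gsm vT.
have full q : g T q < v -> g T q - g s q = T - s.
  move=> qv; apply: (traj_full_rate s0 sT (lexx T) _ (_ : g s m < g T m)).
    move=> u su uT; have := traj_mono q (le_trans s0 su) uT (lexx T).
    have := traj_mono m s0 su uT; lra.
  by rewrite gsm.
have sum := traj_sum s0 sT (lexx T).
rewrite (bigID [pred q | g T q < v]) /= (eq_bigr (fun _ => T - s)) in sum; last first.
  by move=> q; exact: full.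
rewrite sumr_const in sum.
have rest : g T m - v <= \sum_(q | ~~ (g T q < v)) (g T q - g s q).
  rewrite (bigD1 m) /=; last by rewrite -leNgt ltW.
  by rewrite gsm lerDl; apply: sumr_ge0 => q _; rewrite subr_ge0 traj_mono.
have := traj_lipschitz m s0 sT (lexx T); rewrite gsm => lip_m.
have Ts : 0 < T - s by lra.
rewrite cardsE -(ltr_nat R) -(ltr_pM2r Ts) !mulr_natl; lra.
Qed.

Variable mu : R.
Hypotheses (a_ge0 : forall l, 0 <= a l) (a_le_mu : forall l, a l <= mu).
Hypothesis K_le_empty : (K <= #|[set l | a l == 0%R]|)%N.

(* A node ending above [mu] crosses a level [v > mu] while fewer than [K]
   nodes end below [v]; yet the [K] initially empty nodes end below [v] if
   [T < v], a node below [mu] would have [K] nodes below it, and if no node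
   ends below [mu] the total load exceeds [N * mu]. *)
Lemma trajectory_le_mu :
  \sum_l a l + K%:R * T <= N%:R * mu -> forall m, g T m <= mu.
Proof.
move=> total_le m; rewrite leNgt; apply/negP => mu_lt.
set v := (mu + g T m) / 2.
have mu_v : mu < v by rewrite /v; lra.
have v_m : v < g T m by rewrite /v; lra.
have v0 : g 0 m <= v by rewrite traj_init; have := a_le_mu m; lra.
have [s [s0 sT gsm]] :=
  upper_lipschitz_ivt (fun u => g u m) T0 (fun s t => traj_lipschitz m) v v0 (ltW v_m).
have few_below := card_lt_rising s0 sT gsm v_m.
have [T_v|v_T] := ltP T v.
  suff : (#|[set l | a l == 0%R]| <= #|[set q | (g T q < v)%R]|)%N.
    by move=> /(leq_trans K_le_empty)/(leq_ltn_trans)/(_ few_below); rewrite ltnn.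
  apply: subset_leq_card; apply/subsetP => q; rewrite !inE => /eqP aq0.
  by have := traj_lipschitz q (lexx 0) T0 (lexx T); rewrite traj_init aq0; lra.
have [/existsP[q q_lt]|/existsPn all_ge] := boolP [exists q, g T q < mu].
  have not_full : g T q - a q < T by have := a_ge0 q; lra.
  suff : (#|[set q' | (g T q' <= g T q)%R]| <= #|[set q | (g T q < v)%R]|)%N.
    move=> /(leq_trans (card_le_not_full_rate not_full)).
    by move=> /(leq_ltn_trans)/(_ few_below); rewrite ltnNge leqnSn.
  by apply: subset_leq_card; apply/subsetP => q'; rewrite !inE; lra.
have total_T : \sum_l g T l - \sum_l a l = K%:R * T.
  have := traj_sum (lexx 0) T0 (lexx T).
  by rewrite sumrB (eq_bigr a (fun l _ => traj_init l)) subr0.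
have : N%:R * mu < \sum_l g T l.
  rewrite -[N in N%:R]card_ord mulr_natl -sumr_const -subr_gt0 -sumrB (bigD1 m) //=.
  apply: ltr_pwDl; first lra.
  by apply: sumr_ge0 => l _; rewrite subr_ge0 leNgt all_ge.
lra.
Qed.
End Trajectory.

Lemma exists_between_sum {R : realType} {I : finType} (lo hi : I -> R) (tau : R) :
  (forall i, lo i <= hi i) -> \sum_i lo i <= tau <= \sum_i hi i ->
  exists u : I -> R, (forall i, lo i <= u i <= hi i) /\ \sum_i u i = tau.
Proof.
move=> lo_hi /andP[lo_tau tau_hi].
set L := \sum_i lo i in lo_tau *; set H := \sum_i hi i in tau_hi *.
pose th := if H == L then 0 else (tau - L) / (H - L).
have th01 : 0 <= th <= 1.
  rewrite /th; case: eqP => [_|/eqP HL]; first by rewrite lexx ler01.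
  by rewrite divr_ge0 ?ler_pdivrMr /=; lra.
exists (fun i => lo i + th * (hi i - lo i)); split.
  by move=> i; have := lo_hi i; case/andP: th01 => *; apply/andP; split; nra.
rewrite big_split /= -mulr_sumr sumrB -/L -/H /th.
case: eqP => [HL|/eqP HL]; first lra.
by rewrite divfK ?subr_eq0 //; ring.
Qed.

Section KSubsetDecomposition.
Context {R : realType} {N : nat}.

(* [w] exhibits [y] as a point of the hypersimplex scaled by [c]: a
   nonnegative combination of indicators of [K]-subsets of [A]. *)
Definition ksubset_decomposition (K : nat) (c : R) (y : 'I_N -> R)
    (A : {set 'I_N}) (w : {set 'I_N} -> R) :=
  [/\ forall S, 0 <= w S,
      forall S, w S != 0 -> (#|S| == K) && (S \subset A),
      forall l : 'I_N, \sum_(S : {set 'I_N} | l \in S) w S = y l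
    & \sum_(S : {set 'I_N}) w S = c].

Lemma ksubset_decomposition_zero K c (y : 'I_N -> R) A :
  0 <= c -> (forall l, y l = 0) -> K = 0%N \/ c = 0 ->
  exists w, ksubset_decomposition K c y A w.
Proof.
move=> c0 y0 K0_c0; exists (fun S => if S == set0 then c else 0); split.
- by move=> S; case: ifP.
- move=> S; case: ifP => [/eqP -> c_neq0|]; last by rewrite eqxx.
  case: K0_c0 => [->|c_eq0]; last by rewrite c_eq0 eqxx in c_neq0.
  by rewrite cards0 eqxx sub0set.
- move=> l; rewrite y0 big1 // => S lS; case: eqP lS => // ->; by rewrite inE.
- by rewrite (bigD1 set0) //= eqxx big1 ?addr0 // => S /negbTE ->.
Qed.

Lemma sum_setU1_reindex (F : {set 'I_N} -> R) (Q : pred {set 'I_N}) (p : 'I_N) :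
  (forall S : {set 'I_N}, p \in S -> F S = 0) ->
  \sum_(S | Q S) (if p \in S then F (S :\ p) else 0) = \sum_(S | Q (p |: S)) F S.
Proof.
move=> F0; rewrite -big_mkcondr /=.
rewrite (reindex_onto (fun S => p |: S) (fun S => S :\ p)) /=; last first.
  by move=> S /andP[_ pS]; rewrite setD1K.
rewrite [RHS](bigID (fun S : {set 'I_N} => p \in S)) /=.
rewrite [X in _ = X + _]big1 ?add0r; last first.
  by move=> S /andP[_]; apply: F0.
apply: eq_big => S; last by move=> /andP[_ /eqP ->].
rewrite setU11 andbT; congr (_ && _).
have [pS|pNS] := boolP (p \in S); last by rewrite setU1K // eqxx.
by apply/negbTE/eqP => /setP/(_ p); rewrite !inE eqxx pS.
Qed.

Lemma ksubset_decomposition_add K (c b : R) (y u v : 'I_N -> R) (A : {set 'I_N}) p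
    (wu wv : {set 'I_N} -> R) :
  (0 < K)%N -> p \in A -> y p = b -> (forall l, l != p -> y l = u l + v l) ->
  ksubset_decomposition K.-1 b u (A :\ p) wu ->
  ksubset_decomposition K (c - b) v (A :\ p) wv ->
  ksubset_decomposition K c y A
    (fun S => wv S + (if p \in S then wu (S :\ p) else 0)).
Proof.
move=> K_gt0 pA ypb yuv [wu0 wu_sets wu_rows wu_total] [wv0 wv_sets wv_rows wv_total].
have avoid_p k (w : {set 'I_N} -> R) (S : {set 'I_N}) :
    (forall S, w S != 0 -> (#|S| == k) && (S \subset A :\ p)) -> p \in S -> w S = 0.
  move=> w_sets pS; apply/eqP; apply: contraT => /w_sets/andP[_ /subsetP subS].
  by have := subS p pS; rewrite !inE eqxx.
have wu_p := avoid_p _ wu _ wu_sets; have wv_p := avoid_p _ wv _ wv_sets.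
split.
- by move=> S; apply: addr_ge0 => //; case: ifP.
- move=> S; have [pS|pNS] := boolP (p \in S).
    rewrite wv_p // add0r => /wu_sets/andP[/eqP cardS subS]; apply/andP; split.
      by rewrite (cardsD1 p S) pS cardS add1n prednK.
    apply/subsetP => q qS; have [->//|qp] := eqVneq q p.
    have : q \in S :\ p by rewrite !inE qp.
    by move/(subsetP subS); rewrite !inE => /andP[].
  rewrite addr0 => /wv_sets/andP[-> subS] /=.
  by apply: subset_trans subS (subD1set _ _).
- move=> l; rewrite big_split /= (sum_setU1_reindex _ (fun S => l \in S) _ wu_p).
  have [->|lp] := eqVneq l p.
    rewrite big1; last by move=> S; apply: wv_p.
    by rewrite (eq_bigl xpredT) ?wu_total ?add0r // => S; rewrite setU11.
  have -> : \sum_(S : {set 'I_N} | l \in p |: S) wu S =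
            \sum_(S : {set 'I_N} | l \in S) wu S.
    by apply: eq_bigl => S; rewrite in_setU1 (negbTE lp).
  by rewrite wv_rows wu_rows yuv // addrC.
- rewrite big_split /= wv_total (sum_setU1_reindex _ xpredT _ wu_p) wu_total; ring.
Qed.

(* With [d = c - y p], the lower bounds [max 0 (y l - d)] leave room for a
   part of total [(K - 1) * y p]: either fewer than [K] of them are positive,
   each at most [y p], or at least [K] are, which costs [K * d] out of the
   total [K * c - y p]. *)
Lemma sum_excess_le K c (y : 'I_N -> R) p : (0 < K)%N ->
  (forall l, 0 <= y l) -> (forall l, y l <= y p) -> y p <= c ->
  \sum_l y l = K%:R * c ->
  \sum_(l | l != p) Num.max 0 (y l - (c - y p)) <= K.-1%:R * y p.
Proof.
move=> K_gt0 y0 y_le_p yp_c sum_y.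
set d := c - y p; set J := [set l | (l != p) && (d < y l)].
have KE : K.-1%:R = K%:R - 1 :> R by rewrite -[in RHS](prednK K_gt0) -natr1 addrK.
have sum_J : \sum_(l | l != p) Num.max 0 (y l - d) = \sum_(l in J) (y l - d).
  rewrite (bigID (fun l => d < y l)) /= [X in _ + X]big1 ?addr0; last first.
    by move=> l /andP[_]; rewrite -leNgt => hl; apply/max_idPl; lra.
  apply: eq_big => [l|l /andP[_ hl]]; first by rewrite inE.
  by apply/max_idPr; lra.
have sum_rest : \sum_(l | l != p) y l = K%:R * c - y p.
  by move: sum_y; rewrite (bigD1 p) //=; lra.
rewrite sum_J; have [J_small|J_big] := ltnP #|J| K.
  apply: le_trans (_ : \sum_(l in J) y p <= _).
    by apply: ler_sum => l _; have := y_le_p l; rewrite /d; lra.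
  rewrite sumr_const -[y p *+ _]mulr_natl; apply: ler_wpM2r; first exact: y0.
  by rewrite ler_nat -ltnS prednK.
have d0 : 0 <= d by rewrite /d; lra.
have sum_J_le : \sum_(l in J) y l <= \sum_(l | l != p) y l.
  rewrite [X in _ <= X](bigID (fun l => d < y l)) /=.
  rewrite (eq_bigl (fun l => (l != p) && (d < y l))); last by move=> l; rewrite inE.
  by rewrite lerDl sumr_ge0.
have : K%:R * d <= #|J|%:R * d by rewrite ler_wpM2r // ler_nat.
have Kd : K%:R * d = K%:R * c - K%:R * y p by rewrite /d; ring.
rewrite sumrB sumr_const -mulr_natl KE; lra.
Qed.

(* Induction on the support: the largest entry [y p] is split off as [y p]
   copies of [p] completed by a decomposition of a part [u] of the other
   entries (with [K - 1] and [y p]), the rest [v] being decomposed with [K]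
   and [c - y p]. *)
Lemma ksubset_decomposition_exists K c (y : 'I_N -> R) (A : {set 'I_N}) :
  0 <= c -> (forall l, 0 <= y l) -> (forall l, y l <= c) ->
  (forall l, l \notin A -> y l = 0) -> \sum_l y l = K%:R * c ->
  exists w, ksubset_decomposition K c y A w.
Proof.
have [n] := ubnP #|A|; elim: n K c y A => // n IH K c y A An c0 y0 y_c yA sum_y.
have [K0|K_gt0] := posnP K.
  apply: ksubset_decomposition_zero => //; last by left.
  move: sum_y; rewrite K0 mul0r => /eqP; rewrite psumr_eq0 // => /allP y_eq0 l.
  by apply/eqP; apply: (implyP (y_eq0 l (mem_index_enum l))).
have KE : K%:R = K.-1%:R + 1 :> R by rewrite natr1 prednK.
have [c_eq0|c_neq0] := eqVneq c 0.
  apply: ksubset_decomposition_zero => //; last by right.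
  by move=> l; have := y0 l; have := y_c l; lra.
have [l0 y_l0] : exists l, 0 < y l.
  apply/existsP; apply: contraT => /existsPn y_le0.
  have : \sum_l y l <= 0 by apply: sumr_le0 => l _; rewrite leNgt y_le0.
  by rewrite sum_y leNgt mulr_gt0 ?ltr0n // lt_def c_neq0.
have [p _ y_le_p] := @arg_maxP _ _ _ l0 xpredT y isT.
have yp_gt0 : 0 < y p by apply: lt_le_trans y_l0 (y_le_p _ _).
have pA : p \in A by apply: contraT => /yA yp0; lra.
set d := c - y p; have d0 : 0 <= d by have := y_c p; rewrite /d; lra.
pose lo l := if l == p then 0 else Num.max 0 (y l - d).
pose hi l := if l == p then 0 else y l.
have sum_off_p (f : 'I_N -> R) :
    \sum_l (if l == p then 0 else f l) = \sum_(l | l != p) f l.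
  by rewrite (bigD1 p) //= eqxx add0r; apply: eq_bigr => l /negbTE ->.
have sum_hi : \sum_l hi l = K%:R * c - y p.
  by rewrite sum_off_p; move: sum_y; rewrite (bigD1 p) //=; lra.
have lo_hi l : lo l <= hi l.
  by rewrite /lo /hi; case: eqP => // _; rewrite ge_max y0 /=; lra.
have [u [u_bounds sum_u]] : exists u : 'I_N -> R,
    (forall l, lo l <= u l <= hi l) /\ \sum_l u l = K.-1%:R * y p.
  apply: exists_between_sum => //; apply/andP; split.
    by rewrite sum_off_p; apply: sum_excess_le => // l; exact: y_le_p.
  by rewrite sum_hi KE; have := y_c p; have := ler0n R K.-1; nra.
pose v l := hi l - u l.
have hi_A l : l \notin A :\ p -> hi l = 0.
  by rewrite /hi !inE negb_and negbK; case: eqP => //= _ /yA.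
have u_bounds' l : 0 <= u l <= hi l.
  have /andP[lo_u ->] := u_bounds l; rewrite andbT (le_trans _ lo_u) // /lo.
  by case: eqP => // _; rewrite le_max lexx.
have [wu decomp_u] : exists wu, ksubset_decomposition K.-1 (y p) u (A :\ p) wu.
  apply: IH => //; first by move: An; rewrite (cardsD1 p A) pA add1n ltnS.
  - by move=> l; case/andP: (u_bounds' l).
  - move=> l; case/andP: (u_bounds' l) => _ /le_trans; apply.
    by rewrite /hi; case: eqP => // _; exact: y_le_p.
  - by move=> l /hi_A hi0; have := u_bounds' l; rewrite hi0; lra.
have [wv decomp_v] : exists wv, ksubset_decomposition K d v (A :\ p) wv.
  apply: IH => //; first by move: An; rewrite (cardsD1 p A) pA add1n ltnS.
  - by move=> l; have := u_bounds' l; rewrite /v; lra.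
  - move=> l; have := u_bounds l; rewrite /v /lo /hi; case: eqP => _; first lra.
    have : y l - d <= Num.max 0 (y l - d) by rewrite le_max lexx orbT.
    lra.
  - by move=> l /hi_A hi0; have := u_bounds' l; rewrite /v hi0; lra.
  - by rewrite sumrB sum_hi sum_u KE /d; ring.
exists (fun S => wv S + (if p \in S then wu (S :\ p) else 0)).
apply: ksubset_decomposition_add decomp_u decomp_v => // l /negbTE lp.
by rewrite /v /hi lp; ring.
Qed.
End KSubsetDecomposition.

Section Storage.
Context {R : realType} {K N : nat} (mu : R) (lam : 'I_K -> R).
Hypotheses (K_le_N : (K <= N)%N) (mu_gt0 : 0 < mu) (lam_ge0 : forall i, 0 <= lam i).

Local Notation a := (wf_init K N mu lam).
Local Notation C := (wf_coded K mu lam).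

Definition systematic_set (i : 'I_K) : {set 'I_N} := [set j | val j == val i].

Lemma wf_init_systematic {l} i : val l = val i -> a l = Num.min (lam i) mu.
Proof.
move=> li; rewrite /wf_init (big_pred1 i) // => j /=.
by rewrite li; apply/eqP/eqP => [/val_inj|->].
Qed.

Lemma wf_init_parity l : (K <= val l)%N -> a l = 0.
Proof.
move=> Kl; rewrite /wf_init big_pred0 // => j; apply/negbTE/eqP => jl.
by move: (ltn_ord j); rewrite jl ltnNge Kl.
Qed.

Lemma wf_init_bounds l : 0 <= a l <= mu.
Proof.
have [lK|Kl] := ltnP (val l) K; last by rewrite wf_init_parity // lexx ltW.
by rewrite (wf_init_systematic (Ordinal lK)) // le_min ge_min lam_ge0 !lexx ltW ?orbT.
Qed.

Lemma sum_wf_init : \sum_l a l = \sum_i Num.min (lam i) mu.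
Proof.
rewrite /wf_init (exchange_big_dep xpredT) //=; apply: eq_bigr => i _.
by rewrite (big_pred1 (widen_ord K_le_N i)).
Qed.

Lemma in_region_wf_init : in_region K N mu lam <-> \sum_l a l + K%:R * C <= N%:R * mu.
Proof. by rewrite /in_region big_split /= -mulr_sumr -sum_wf_init. Qed.

Lemma card_wf_init_eq0 : (K <= N - K)%N -> (K <= #|[set l | a l == 0%R]|)%N.
Proof.
move=> K_le_NK; apply: leq_trans K_le_NK _; rewrite -card_ord_geq.
by apply: subset_leq_card; apply/subsetP => l; rewrite !inE => /wf_init_parity ->.
Qed.

Lemma wf_coded_ge0 : 0 <= C.
Proof. by apply: sumr_ge0 => i _; rewrite le_max lexx. Qed.

Lemma wf_serves_iff_region : (K <= N - K)%N ->
  wf_serves K N mu lam <-> in_region K N mu lam.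
Proof.
move=> K_le_NK; rewrite in_region_wf_init; split.
  case=> -[g g_traj] all_le; have := traj_sum g_traj (lexx 0) wf_coded_ge0 (lexx C).
  rewrite sumrB (eq_bigr a (fun l _ => traj_init g_traj l)) subr0 => total.
  suff : \sum_l g C l <= N%:R * mu by lra.
  rewrite -[N in N%:R]card_ord mulr_natl -sumr_const; apply: ler_sum => l _.
  exact: all_le g_traj l.
have a_ge0 l : 0 <= a l by case/andP: (wf_init_bounds l).
have a_le_mu l : a l <= mu by case/andP: (wf_init_bounds l).
have empty := card_wf_init_eq0 K_le_NK.
move=> total_le; split.
  by exists (waterfill K a); apply: waterfill_trajectory wf_coded_ge0.
move=> g g_traj.
exact: trajectory_le_mu g_traj wf_coded_ge0 _ _ _ empty total_le.
Qed.

Lemma recovering_systematic i : recovering K N i (systematic_set i).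
Proof. by rewrite /recovering eqxx. Qed.

Lemma card_systematic_set i : #|systematic_set i| = 1%N.
Proof.
suff -> : systematic_set i = [set widen_ord K_le_N i] by rewrite cards1.
by apply/setP => j; rewrite !inE -val_eqE.
Qed.

Lemma card_recovering {i S} :
  recovering K N i S -> S != systematic_set i -> #|S| = K.
Proof. by case/orP => [/eqP->|/andP[/eqP-> _]]; rewrite ?eqxx. Qed.

Lemma sum_node_loads (x : 'I_K -> {set 'I_N} -> R) :
  \sum_(l : 'I_N) \sum_(i < K) \sum_(S | recovering K N i S && (l \in S)) x i S =
  \sum_(i < K) \sum_(S | recovering K N i S) x i S *+ #|S|.
Proof.
rewrite exchange_big; apply: eq_bigr => i _.
under eq_bigr do rewrite big_mkcondr.
rewrite exchange_big; apply: eq_bigr => S _.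
by rewrite -big_mkcond /= sumr_const.
Qed.

(* A request for [f_i] costs one node-unit on the systematic node, which
   serves at most [mu] of it, and [K] node-units otherwise. *)
Lemma file_cost_ge i (x : {set 'I_N} -> R) : (forall S, 0 <= x S) ->
  \sum_(S | recovering K N i S) x S = lam i -> x (systematic_set i) <= mu ->
  Num.min (lam i) mu + K%:R * posp (lam i - mu)
  <= \sum_(S | recovering K N i S) x S *+ #|S|.
Proof.
move=> x0 sum_x x_sys_le.
rewrite (bigD1 (systematic_set i)) ?recovering_systematic //= card_systematic_set.
rewrite (bigD1 (systematic_set i)) ?recovering_systematic //= in sum_x.
rewrite (eq_bigr (fun S => x S *+ K)); last first.
  by move=> S /andP[rS nS]; rewrite (card_recovering rS nS).
rewrite sumrMnl -mulr_natr.
set rest := \sum_(S | _) x S in sum_x *.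
have rest0 : 0 <= rest by apply: sumr_ge0.
have K1 : 1 <= K%:R :> R by rewrite ler1n (leq_ltn_trans (leq0n _) (ltn_ord i)).
have := x0 (systematic_set i); rewrite /posp; case_min_max; nra.
Qed.

Lemma capacity_in_region : in_capacity_region K N mu lam -> in_region K N mu lam.
Proof.
case=> x [x0 [sum_x load_le]]; rewrite /in_region.
apply: le_trans (_ : \sum_(l : 'I_N) \sum_(i < K)
    \sum_(S | recovering K N i S && (l \in S)) x i S <= _); last first.
  rewrite -[N in N%:R]card_ord mulr_natl -sumr_const.
  by apply: ler_sum => l _; exact: load_le.
rewrite sum_node_loads; apply: ler_sum => i _; apply: file_cost_ge => //.
apply: le_trans (load_le (widen_ord K_le_N i)).
rewrite (bigD1 i) //= (bigD1 (systematic_set i)) /=; last first.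
  by rewrite recovering_systematic inE /= eqxx.
rewrite -addrA lerDl; apply: addr_ge0; first by apply: sumr_ge0 => S _.
by apply: sumr_ge0 => j _; apply: sumr_ge0 => S _.
Qed.

(* The coded rate [C] is spread over the nodes in proportion to their spare
   capacity, capped at [C] so that the loads can come from [K]-subsets. *)
Lemma exists_coded_loads : (K <= N - K)%N -> in_region K N mu lam ->
  exists y : 'I_N -> R, (forall l, 0 <= y l <= Num.min C (mu - a l)) /\
                        \sum_l y l = K%:R * C.
Proof.
move=> K_le_NK /in_region_wf_init total_le; apply: exists_between_sum.
  by move=> l; rewrite le_min wf_coded_ge0 subr_ge0; case/andP: (wf_init_bounds l).
rewrite big1 // mulr_ge0 ?wf_coded_ge0 //=.
have [C_le_mu|mu_lt_C] := leP C mu; last first.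
  rewrite (eq_bigr (fun l => mu - a l)); last first.
    by move=> l _; apply/min_idPr; case/andP: (wf_init_bounds l) => a0 _; lra.
  by rewrite sumrB sumr_const card_ord -mulr_natl; lra.
rewrite (bigID (fun l : 'I_N => (K <= l)%N)) /=.
apply: ler_wpDr.
  apply: sumr_ge0 => l _; rewrite le_min wf_coded_ge0 subr_ge0.
  by case/andP: (wf_init_bounds l).
rewrite (eq_bigr (fun _ => C)) => [|l Kl]; last first.
  by rewrite wf_init_parity // subr0; apply/min_idPl.
rewrite sumr_const -[C *+ _]mulr_natl; apply: ler_wpM2r; first exact: wf_coded_ge0.
rewrite ler_nat (leq_trans K_le_NK) // -card_ord_geq; apply/eq_leq/eq_card => l.
by rewrite !inE.
Qed.

Lemma recovering_of_support (y : 'I_N -> R) i (S : {set 'I_N}) :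
  (forall l, 0 <= y l) -> (forall l, y l <= mu - a l) -> mu < lam i ->
  (#|S| == K) && (S \subset [set l | y l != 0]) -> recovering K N i S.
Proof.
move=> y0 y_le lam_gt /andP[cardS /subsetP S_supp].
rewrite /recovering cardS /=; apply/orP; right.
apply/forall_inP => j /S_supp; rewrite inE; apply: contra => /eqP ji.
have := y_le j; rewrite (wf_init_systematic i ji) (min_idPr (ltW lam_gt)) subrr.
by move=> y_le0; rewrite eq_le y_le0 y0.
Qed.

Lemma capacity_of_coded_decomposition (y : 'I_N -> R) (w : {set 'I_N} -> R) :
  (forall l, 0 <= y l <= Num.min C (mu - a l)) ->
  ksubset_decomposition K C y [set l | y l != 0] w -> in_capacity_region K N mu lam.
Proof.
move=> y_bounds [w0 w_sets w_rows w_total].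
have y0 l : 0 <= y l by case/andP: (y_bounds l).
have y_le_C l : y l <= C by case/andP: (y_bounds l); rewrite le_min => _ /andP[].
have y_le l : y l <= mu - a l by case/andP: (y_bounds l); rewrite le_min => _ /andP[].
pose e i := posp (lam i - mu).
pose x i S := (if S == systematic_set i then Num.min (lam i) mu else 0) + e i / C * w S.
have e0 i : 0 <= e i by rewrite /e /posp le_max lexx.
have min_e i : Num.min (lam i) mu + e i = lam i by rewrite /e /posp; case_min_max; lra.
have coded_sum i (P : pred {set 'I_N}) :
    e i / C * \sum_(S | recovering K N i S && P S) w S = e i / C * \sum_(S | P S) w S.
  have [e_le0|e_gt0] := leP (e i) 0.
    suff -> : e i = 0 by rewrite !mul0r.
    by have := e0 i; lra.
  congr (_ * _); rewrite [RHS](bigID (recovering K N i)) /= [X in _ = _ + X]big1 ?addr0.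
    by apply: eq_bigl => S; rewrite andbC.
  move=> S /andP[_ not_rec]; apply/eqP; apply: contraR not_rec => /w_sets.
  apply: recovering_of_support => //.
  by move: e_gt0; rewrite /e /posp; case_min_max; lra.
have sys_sum i (P : pred {set 'I_N}) : P (systematic_set i) ->
    \sum_(S | recovering K N i S && P S)
      (if S == systematic_set i then Num.min (lam i) mu else 0) = Num.min (lam i) mu.
  move=> P_sys; rewrite (bigD1 (systematic_set i)) ?recovering_systematic //= eqxx.
  by rewrite big1 ?addr0 // => S /andP[_ /negbTE ->].
exists x; split.
  move=> i S; apply: addr_ge0; last by rewrite mulr_ge0 ?divr_ge0 ?wf_coded_ge0.
  by case: ifP; rewrite // le_min lam_ge0 ltW.
split.
  move=> i; rewrite (eq_bigl (fun S => recovering K N i S && xpredT S)); last first.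
    by move=> S; rewrite andbT.
  rewrite big_split /= sys_sum // -mulr_sumr coded_sum w_total -[RHS]min_e.
  have [->|e_neq0] := eqVneq (e i) 0; first by rewrite !mul0r.
  rewrite divfK //; apply: contra e_neq0 => /eqP C0.
  have e_le_C : e i <= C.
    by rewrite /wf_coded (bigD1 i) //= lerDl; apply: sumr_ge0 => j _; exact: e0.
  by rewrite C0 in e_le_C; rewrite eq_le e_le_C e0.
move=> l.
have node_sum i : \sum_(S | recovering K N i S && (l \in S)) x i S =
    (if val i == val l then Num.min (lam i) mu else 0) + e i / C * y l.
  rewrite big_split /= -mulr_sumr coded_sum w_rows; congr (_ + _).
  have [il|il] := eqVneq (val i) (val l); first by apply: sys_sum; rewrite inE il.
  apply: big1 => S /andP[_ lS]; case: eqP lS => // ->.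
  by rewrite inE eq_sym (negbTE il).
rewrite (eq_bigr _ (fun i _ => node_sum i)) big_split /= -big_mkcond -!mulr_suml.
have [C0|C_neq0] := eqVneq C 0.
  have -> : y l = 0 by have := y0 l; have := y_le_C l; rewrite C0; lra.
  by rewrite mulr0 addr0; case/andP: (wf_init_bounds l).
by rewrite divff // mul1r -/(wf_init K N mu lam l); have := y_le l; lra.
Qed.

Lemma region_capacity : (K <= N - K)%N ->
  in_region K N mu lam -> in_capacity_region K N mu lam.
Proof.
move=> K_le_NK /(exists_coded_loads K_le_NK)[y [y_bounds sum_y]].
have [w decomp] : exists w, ksubset_decomposition K C y [set l | y l != 0] w.
  apply: ksubset_decomposition_exists sum_y => [|l|l|l].
  - exact: wf_coded_ge0.
  - by case/andP: (y_bounds l).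
  - by case/andP: (y_bounds l); rewrite le_min => _ /andP[].
  - by rewrite inE negbK => /eqP.
exact: capacity_of_coded_decomposition y_bounds decomp.
Qed.
End Storage.

Theorem theorem2 (R : realType) (K N : nat) (mu : R) (lam : 'I_K -> R) :
  (1 <= K)%N -> (K <= N - K)%N -> 0 < mu -> (forall i, 0 <= lam i) ->
  (wf_serves K N mu lam <-> in_region K N mu lam) /\
  (in_capacity_region K N mu lam <-> in_region K N mu lam).
Proof.
move=> _ K_le_NK mu_gt0 lam_ge0.
have K_le_N : (K <= N)%N by apply: leq_trans K_le_NK (leq_subr _ _).
split; first exact: wf_serves_iff_region.
split; first exact: capacity_in_region.
exact: region_capacity.
Qed.
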